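(* Let $\mu,\nu\in\mathcal{P}(\mathcal{X})$, $0<m_1\le m_2<\infty$, $K:\mathcal{X}\times\mathcal{X}\to(0,1]$ measurable with lower decay $l$, and let $(\alpha_1,\tilde\alpha_1)$, $(\alpha_2,\tilde\alpha_2)$ be pairs of tail functions (with $\mu(B_{m_1})>0$, $\nu(B_{m_1})>0$, $\alpha_1,\alpha_2>0$). Define \[ \tilde\beta_2(r)=\frac{1}{\nu(B_{m_1})}\sup_{a\ge r}\frac{\nu(B_a^{\mathsf c})}{\alpha_2(a)\wedge1}\ (r\ge m_1),\qquad \beta_2(r)=\frac{1}{\nu(B_{m_1})}\Big(\sup_{a\ge r}\frac{\nu(B_a^{\mathsf c})}{\tilde\alpha_2(a)}+\nu(B_r^{\mathsf c})\Big)\ (r\ge m_2). \] Let $r\ge m_2$ and assume $\tilde\alpha_1(m_2)\le0.5$, $\tilde\beta_2(m_1)\le0.5$ and $l(r)\le1$. Then for all $f\in\mathcal{F}^{\mu,norm}_{\alpha_1,\tilde\alpha_1}$ and $g\in\mathcal{G}^{\nu,norm}_{\alpha_2,\tilde\alpha_2}$, \[ \int L_{K^\top,\nu}(g)f\,d\mu\ge l(r)-\tilde\alpha_1(m_2)-4\tilde\beta_2(m_1)-4\alpha_1(r)-4\tilde\alpha_1(r)-5\beta_2(r)-5\tilde\beta_2(r). \]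
   Context: $\mathcal{X}$ is a Polish space with metric $d_{\mathcal{X}}$, $x_0$ fixed, $B_r=\{x:d_{\mathcal{X}}(x_0,x)\le r\}$, $B_r^{\mathsf c}=\mathcal{X}\setminus B_r$; $a\wedge b=\min\{a,b\}$. A non-increasing $l:[0,\infty)\to[0,\infty)$ is a lower decay of $K$ if $\inf_{x,y\in B_r}K(x,y)\ge l(r)$ for all $r>0$. $L_{K^\top,\nu}g(x)=\int K(y,x)g(y)\,\nu(dy)$. A tail function is a non-increasing $\alpha:(0,\infty)\to[0,\infty)$ with $\lim_{r\to\infty}\alpha(r)=0$. For $\rho\in\mathcal{P}(\mathcal{X})$: $\mathcal{F}^{\rho}_{\alpha,\tilde\alpha}$ is the set of $f\in L^2(\rho)$ with $f\mathbf 1_{B_{m_2}}\ge0$ $\rho$-a.s., $\int_{B_r^{\mathsf c}}f_+\,d\rho\le\alpha(r)\int f\,d\rho$ for all $r\ge m_1$, $\int_{B_r^{\mathsf c}}f_-\,d\rho\le\tilde\alpha(r)\int f\,d\rho$ for all $r\ge m_2$; $\mathcal{G}^{\rho}_{\alpha,\tilde\alpha}=\{g\in L^2(\rho):\int fg\,d\rho\ge0\ \forall f\in\mathcal{F}^{\rho}_{\alpha,\tilde\alpha}\}$; superscript $norm$ denotes elements with $\int\cdot\,d\rho=1$. *)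

From HB Require Import structures.
From mathcomp Require Import all_boot all_order all_algebra.
From mathcomp Require Import all_classical all_reals all_analysis.
Set Implicit Arguments. Unset Strict Implicit. Unset Printing Implicit Defensive.
Import Order.TTheory GRing.Theory Num.Theory.
Import numFieldNormedType.Exports.
Local Open Scope classical_set_scope.
Local Open Scope ring_scope.

Section Defs.
Context {d : measure_display} {X : measurableType d} {R : realType}.

Definition is_metric (dX : X -> X -> R) : Prop :=
  [/\ forall x y, 0 <= dX x y, forall x y, dX x y = 0 <-> x = y,
      forall x y, dX x y = dX y x &
      forall x y z, dX x z <= dX x y + dX y z].

Definition polish_borel (dX : X -> X -> R) : Prop :=
  [/\ is_metric dX,
      exists D : set X, countable D /\
        forall x (e : R), 0 < e -> exists2 y, D y & dX x y < e,
      (forall u : nat -> X,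
         (forall e : R, 0 < e -> exists N, forall m n, (N <= m)%N -> (N <= n)%N ->
            dX (u m) (u n) < e) ->
         exists x, forall e : R, 0 < e -> exists N, forall n, (N <= n)%N -> dX (u n) x < e) &
      (forall A : set X, measurable A <->
         <<s [set O : set X | forall x, O x -> exists2 e : R, 0 < e &
               [set y | dX x y < e] `<=` O] >> A)].

Definition ball_c (dX : X -> X -> R) (x0 : X) (r : R) : set X :=
  [set x | dX x0 x <= r].

Definition lower_decay (dX : X -> X -> R) (x0 : X) (K : X -> X -> R) (l : R -> R) : Prop :=
  [/\ (forall r, 0 <= r -> 0 <= l r),
      (forall r s, 0 <= r -> r <= s -> l s <= l r) &
      (forall r, 0 < r -> forall x y, ball_c dX x0 r x -> ball_c dX x0 r y -> l r <= K x y)].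

Definition tail_fun (a : R -> R) : Prop :=
  [/\ (forall r, 0 < r -> 0 <= a r),
      (forall r s, 0 < r -> r <= s -> a s <= a r) &
      (a x @[x --> +oo%R] --> (0 : R))].

Definition L2 (rho : probability X R) (f : X -> R) : Prop :=
  measurable_fun setT f /\ (\int[rho]_x ((f x) ^+ 2)%:E < +oo)%E.

Definition Fclass (dX : X -> X -> R) (x0 : X) (m1 m2 : R) (rho : probability X R)
  (a ta : R -> R) (f : X -> R) : Prop :=
  [/\ L2 rho f,
      {ae rho, forall x, ball_c dX x0 m2 x -> 0 <= f x},
      (forall r, m1 <= r ->
         (\int[rho]_(x in ~` ball_c dX x0 r) (Num.max (f x) 0)%:E
           <= (a r)%:E * \int[rho]_x (f x)%:E)%E) &
      (forall r, m2 <= r ->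
         (\int[rho]_(x in ~` ball_c dX x0 r) (Num.max (- f x) 0)%:E
           <= (ta r)%:E * \int[rho]_x (f x)%:E)%E)].

Definition Fclass_norm dX x0 m1 m2 rho a ta f : Prop :=
  Fclass dX x0 m1 m2 rho a ta f /\ (\int[rho]_x (f x)%:E = 1)%E.

Definition Gclass (dX : X -> X -> R) (x0 : X) (m1 m2 : R) (rho : probability X R)
  (a ta : R -> R) (g : X -> R) : Prop :=
  L2 rho g /\ forall f, Fclass dX x0 m1 m2 rho a ta f ->
    (0 <= \int[rho]_x (f x * g x)%:E)%E.

Definition Gclass_norm dX x0 m1 m2 rho a ta g : Prop :=
  Gclass dX x0 m1 m2 rho a ta g /\ (\int[rho]_x (g x)%:E = 1)%E.

Definition LKt (K : X -> X -> R) (nu : probability X R) (g : X -> R) (x : X) : R :=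
  fine (\int[nu]_y (K y x * g y)%:E).

Definition ediv (c a : R) : \bar R :=
  if a == 0%R then (if c == 0%R then 0%E else +oo%E) else (c / a)%R%:E.

Definition beta2_tilde (dX : X -> X -> R) (x0 : X) (m1 : R) (nu : probability X R)
  (a2 : R -> R) (r : R) : \bar R :=
  ((fine (nu (ball_c dX x0 m1)))^-1)%:E *
  ereal_sup [set ediv (fine (nu (~` ball_c dX x0 a))) (Num.min (a2 a) 1%R) | a in [set a : R | (r <= a)%R]].

Definition beta2 (dX : X -> X -> R) (x0 : X) (m1 : R) (nu : probability X R)
  (ta2 : R -> R) (r : R) : \bar R :=
  ((fine (nu (ball_c dX x0 m1)))^-1)%:E *
  (ereal_sup [set ediv (fine (nu (~` ball_c dX x0 a))) (ta2 a) | a in [set a : R | (r <= a)%R]]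
   + nu (~` ball_c dX x0 r)).

End Defs.

From HB Require Import structures.
From mathcomp Require Import all_boot all_order all_algebra.
From mathcomp Require Import all_classical all_reals all_analysis.
From mathcomp Require Import measurable_realfun.
From mathcomp Require Import ring lra.
Import Order.TTheory GRing.Theory Num.Theory.
Local Open Scope classical_set_scope.
Local Open Scope ring_scope.
Set Implicit Arguments. Unset Strict Implicit. Unset Printing Implicit Defensive.

(* Write P and N for the nu-integrals of g^+ and g^-, so that P - N = 1, and
   G := L_{K^T,nu} g.  As 0 <= K <= 1, G takes values in [-N, P]; on B_r, where
   K >= l(r), also G >= l(r) (P - Q) - N, with Q the integral of g^+ over the
   complement of B_r.  Pairing g with two bounded elements of the F-class of nu,
   beta~_2(m1) 1_{B_m1} + 1_{g < 0} and beta_2(r) 1_{B_m1} - 1_{B_r^c, g > 0},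
   gives N <= beta~_2(m1) P (hence N <= 2 beta~_2(m1) and P <= 2) and
   Q <= beta_2(r) P.  Splitting f into positive and negative parts inside and
   outside B_r, the tail bounds of the F-class turn the integral of G f into the
   claimed estimate by elementary arithmetic. *)

Section sign_split.
Context (R : realType).
Implicit Types lo hi k z : R.

Lemma mul_ge_posneg lo hi k z : lo <= k <= hi ->
  lo * Num.max z 0 - hi * Num.max (- z) 0 <= k * z.
Proof.
case/andP=> lok khi; case: (leP 0 z) => z0.
  by rewrite (max_r (_ : - z <= 0)) ?oppr_le0 //; nra.
by rewrite (max_l (_ : 0 <= - z)) ?oppr_ge0 ?(ltW z0) //; nra.
Qed.

Lemma mul_le_posneg lo hi k z : lo <= k <= hi ->
  k * z <= hi * Num.max z 0 - lo * Num.max (- z) 0.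
Proof. by move/(mul_ge_posneg (- z)); rewrite opprK mulrN; lra. Qed.

End sign_split.

Lemma indic_ge0 (T : Type) (R : realDomainType) (A : set T) x : 0 <= \1_A x :> R.
Proof. by rewrite indicE ler0n. Qed.

Lemma indic_le1 (T : Type) (R : realDomainType) (A : set T) x : \1_A x <= 1 :> R.
Proof. by rewrite indicE lern1 leq_b1. Qed.

Section integration.
Context d (T : measurableType d) (R : realType) (P : probability T R).
Implicit Types (D : set T) (F f h : T -> R) (k M : R).

Lemma integrable_bounded_mul F h M : measurable_fun setT F ->
  (forall x, `|F x| <= M) -> P.-integrable setT (EFin \o h) ->
  P.-integrable setT (EFin \o (fun x => F x * h x)).
Proof.
move=> mF FM ih.
have -> : EFin \o (fun x => F x * h x) = ((EFin \o F) \* (EFin \o h))%E.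
  by apply/funext => x /=; rewrite EFinM.
apply: integrableMr => //; exists M; split; first exact: num_real.
by move=> y My x _; apply: le_trans (FM x) (ltW My).
Qed.

Lemma integrableZ_EFin k h : P.-integrable setT (EFin \o h) ->
  P.-integrable setT (EFin \o (fun x => k * h x)).
Proof. exact: (integrable_bounded_mul (F := cst k) (M := `|k|)). Qed.

Lemma integrableB_EFin f h : P.-integrable setT (EFin \o f) ->
  P.-integrable setT (EFin \o h) -> P.-integrable setT (EFin \o (fun x => f x - h x)).
Proof.
move=> i1 i2; have := integrableB measurableT i1 i2.
by have -> : ((EFin \o f) \- (EFin \o h))%E = EFin \o (fun x => f x - h x)
  by apply/funext => x /=; rewrite EFinB.
Qed.

Lemma integrable_setTS D (F : T -> \bar R) : measurable D ->
  P.-integrable setT F -> P.-integrable D F.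
Proof. by move=> mD; apply: integrableS. Qed.

Lemma L2_bounded F M : measurable_fun setT F -> (forall x, `|F x| <= M) -> L2 P F.
Proof.
move=> mF FM; split => //.
apply: (@le_lt_trans _ _ (\int[P]_x (cst ((M ^+ 2)%:E) x))%E).
  apply: ge0_le_integral => //.
  - by move=> x _; rewrite lee_fin sqr_ge0.
  - by apply/measurable_EFinP; exact: measurable_funX.
  - move=> x _; rewrite lee_fin /= -real_normK ?num_real //.
    by rewrite lerXn2r ?nnegrE ?(le_trans _ (FM x)).
by rewrite integral_cst //= probability_setT mule1 ltry.
Qed.

Lemma L2_integrable f : L2 P f -> P.-integrable setT (EFin \o f).
Proof.
move=> [mf f2]; have mf2 : measurable_fun setT (fun x => f x ^+ 2) by exact: measurable_funX.
have i2 : P.-integrable setT (EFin \o (fun x => f x ^+ 2)).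
  apply/integrableP; split; first exact/measurable_EFinP.
  by under eq_integral do rewrite /= ger0_norm ?sqr_ge0 //.
have i1 : P.-integrable setT (EFin \o (fun x => 1 + f x ^+ 2)).
  have -> : EFin \o (fun x => 1 + f x ^+ 2) =
      (EFin \o cst 1) \+ (EFin \o (fun x => f x ^+ 2)).
    by apply/funext => x /=; rewrite EFinD.
  by apply: integrableD => //; exact: finite_measure_integrable_cst.
apply: le_integrable i1 => //; first exact/measurable_EFinP.
move=> x _; rewrite /= lee_fin [X in _ <= X]ger0_norm ?addr_ge0 ?sqr_ge0 //.
rewrite -real_normK ?num_real //; have := normr_ge0 (f x); nra.
Qed.

Lemma EFin_Rintegral D h : measurable D -> P.-integrable D (EFin \o h) ->
  (\int[P]_(x in D) (h x)%:E)%E = (\int[P]_(x in D) h x)%:E.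
Proof. by move=> mD ih; rewrite /Rintegral fineK //; exact: integrable_fin_num. Qed.

Lemma Rintegral_indic D A : measurable D -> measurable A ->
  \int[P]_(x in D) \1_A x = fine (P (A `&` D)).
Proof. by move=> mD mA; rewrite /Rintegral integral_indic. Qed.

Lemma Rintegral_setC D h : measurable D -> P.-integrable setT (EFin \o h) ->
  \int[P]_x h x = \int[P]_(x in D) h x + \int[P]_(x in ~` D) h x.
Proof.
move=> mD ih; rewrite -Rintegral_setU ?setUv //; first exact: measurableC.
exact/disj_setPCl.
Qed.

Lemma Rintegral_funrposBneg D f : measurable D -> P.-integrable setT (EFin \o f) ->
  \int[P]_(x in D) f x = \int[P]_(x in D) f^\+ x - \int[P]_(x in D) f^\- x.
Proof.
move=> mD i_f; rewrite -RintegralB //; last 2 first.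
- exact: integrable_setTS mD (integrable_funrpos measurableT i_f).
- exact: integrable_setTS mD (integrable_funrneg measurableT i_f).
by apply: eq_Rintegral => x _; rewrite -[in LHS](funrposBneg f).
Qed.

Lemma Rintegral_mul_ge_on D G f lo hi : measurable D ->
    P.-integrable setT (EFin \o f) -> P.-integrable setT (EFin \o (fun x => G x * f x)) ->
    (forall x, D x -> lo <= G x <= hi) ->
  lo * \int[P]_(x in D) f^\+ x - hi * \int[P]_(x in D) f^\- x <= \int[P]_(x in D) (G x * f x).
Proof.
move=> mD i_f iGf Gb; have iD := integrable_setTS mD.
have ifp := iD _ (integrable_funrpos measurableT i_f).
have ifn := iD _ (integrable_funrneg measurableT i_f).
rewrite -(RintegralZl lo mD ifp) -(RintegralZl hi mD ifn) -RintegralB //; last 2 first.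
- exact: iD _ (integrableZ_EFin lo (integrable_funrpos measurableT i_f)).
- exact: iD _ (integrableZ_EFin hi (integrable_funrneg measurableT i_f)).
apply: le_Rintegral => //; last by move=> x /Gb; exact: mul_ge_posneg.
- by apply/iD/integrableB_EFin; apply: integrableZ_EFin;
    [exact: integrable_funrpos | exact: integrable_funrneg].
- exact: iD _ iGf.
Qed.

Lemma Rintegral_mul_ge_split D G f (lo lo' hi : R) : measurable D ->
    P.-integrable setT (EFin \o f) -> P.-integrable setT (EFin \o (fun x => G x * f x)) ->
    (forall x, D x -> lo <= G x <= hi) -> (forall x, (~` D) x -> lo' <= G x <= hi) ->
  lo * \int[P]_(x in D) f^\+ x - hi * \int[P]_(x in D) f^\- x
    + (lo' * \int[P]_(x in ~` D) f^\+ x - hi * \int[P]_(x in ~` D) f^\- x)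
  <= \int[P]_x (G x * f x).
Proof.
move=> mD i_f iGf GD GDc; rewrite (Rintegral_setC mD iGf).
by apply: lerD; apply: Rintegral_mul_ge_on => //; exact: measurableC.
Qed.

End integration.

Section kernel_operator.
Context d (X : measurableType d) (R : realType) (nu : probability X R).
Variables (K : X -> X -> R) (g : X -> R).
Hypotheses (mK : measurable_fun setT (fun p : X * X => K p.1 p.2))
  (K01 : forall x y, 0 <= K x y <= 1) (ig : nu.-integrable setT (EFin \o g)).

Let mKl x : measurable_fun setT (fun y => K y x) := measurable_fun_pair1 x mK.

Let normK y x : `|K y x| <= 1.
Proof. by case/andP: (K01 y x) => K0 K1; rewrite ger0_norm. Qed.

Let iKg x : nu.-integrable setT (EFin \o (fun y => K y x * g y)).
Proof. exact: integrable_bounded_mul (mKl x) (normK ^~ x) ig. Qed.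

Let igp : nu.-integrable setT (EFin \o g^\+) := integrable_funrpos measurableT ig.
Let ign : nu.-integrable setT (EFin \o g^\-) := integrable_funrneg measurableT ig.

Lemma LKtE x : LKt K nu g x = \int[nu]_y (K y x * g y).
Proof. by []. Qed.

Lemma LKt_le_pos x : LKt K nu g x <= \int[nu]_y g^\+ y.
Proof.
rewrite LKtE; apply: le_Rintegral => // y _.
by apply: le_trans (mul_le_posneg _ (K01 y x)) _; rewrite mul1r mul0r subr0.
Qed.

Lemma LKt_ge_neg x : - (\int[nu]_y g^\- y) <= LKt K nu g x.
Proof.
have := Rintegral_mul_ge_on measurableT ig (iKg x) (fun y _ => K01 y x).
by rewrite mul0r sub0r mul1r.
Qed.

Lemma LKt_ge_on D x l : measurable D -> (forall y, D y -> l <= K y x) ->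
  l * (\int[nu]_(y in D) g^\+ y) - \int[nu]_y g^\- y <= LKt K nu g x.
Proof.
move=> mD lK; have mDc := measurableC mD.
rewrite LKtE (Rintegral_setC mD ign) (Rintegral_setC mD (iKg x)) opprD addrA.
apply: lerD.
  rewrite -[X in _ - X]mul1r; apply: Rintegral_mul_ge_on => // y Dy.
  by rewrite lK //=; case/andP: (K01 y x).
have := Rintegral_mul_ge_on mDc ig (iKg x) (fun y _ => K01 y x).
by rewrite mul0r sub0r mul1r.
Qed.

Lemma measurable_LKt : measurable_fun setT (LKt K nu g).
Proof.
have mg : measurable_fun setT g by apply/measurable_EFinP; exact: measurable_int ig.
have mKt : measurable_fun setT (fun z : X * X => K z.2 z.1).
  change (measurable_fun setT ((fun p : X * X => K p.1 p.2) \o (fun z : X * X => (z.2, z.1)))).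
  exact: measurableT_comp mK (@measurable_swap _ _ X X).
pose Fp z := (K z.2 z.1 * g^\+ z.2)%:E; pose Fn z := (K z.2 z.1 * g^\- z.2)%:E.
have mFp : measurable_fun setT Fp.
  apply/measurable_EFinP/measurable_funM => //.
  exact: measurableT_comp (measurable_funrpos mg) measurable_snd.
have mFn : measurable_fun setT Fn.
  apply/measurable_EFinP/measurable_funM => //.
  exact: measurableT_comp (measurable_funrneg mg) measurable_snd.
have K0 z : 0 <= K z.2 z.1 by case/andP: (K01 z.2 z.1).
have Fp0 z : (0 <= Fp z)%E by rewrite lee_fin mulr_ge0 ?funrpos_ge0.
have Fn0 z : (0 <= Fn z)%E by rewrite lee_fin mulr_ge0 ?funrneg_ge0.
have -> : LKt K nu g = fine \o (fubini_F nu Fp \- fubini_F nu Fn)%E.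
  apply/funext => x; rewrite /= /fubini_F /Fp /Fn -integralB_EFin //; last first.
  - exact: integrable_bounded_mul (mKl x) (normK ^~ x) ign.
  - exact: integrable_bounded_mul (mKl x) (normK ^~ x) igp.
  congr fine; apply: eq_integral => y _.
  by rewrite -EFinB -mulrBr -[in LHS](funrposBneg g).
apply: measurableT_comp; first exact: fine_measurable.
exact: emeasurable_funB (measurable_fun_fubini_tonelli_F _ mFp Fp0)
  (measurable_fun_fubini_tonelli_F _ mFn Fn0).
Qed.

End kernel_operator.

Section tail_classes.
Context d (X : measurableType d) (R : realType) (dX : X -> X -> R) (x0 : X).
Variables (m1 m2 : R) (rho : probability X R) (a ta : R -> R).
Hypothesis mB : forall s, measurable (ball_c dX x0 s).
Local Notation B := (ball_c dX x0).

Let mBc s : measurable (~` B s) := measurableC (mB s).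

Implicit Types (F : X -> R) (M : R).

Lemma Fclass_bounded F M : measurable_fun setT F -> (forall x, `|F x| <= M) ->
  (forall x, B m2 x -> 0 <= F x) ->
  (forall s, m1 <= s -> \int[rho]_(x in ~` B s) F^\+ x <= a s * \int[rho]_x F x) ->
  (forall s, m2 <= s -> \int[rho]_(x in ~` B s) F^\- x <= ta s * \int[rho]_x F x) ->
  Fclass dX x0 m1 m2 rho a ta F.
Proof.
move=> mF FM F0 Fpos Fneg; have L2F := L2_bounded rho mF FM.
have iF := L2_integrable L2F.
split => // [|s s1|s s2]; first exact: aeW.
- have := integrable_setTS (mBc s) (integrable_funrpos measurableT iF).
  by move=> ?; rewrite !EFin_Rintegral // -EFinM lee_fin Fpos.
- have := integrable_setTS (mBc s) (integrable_funrneg measurableT iF).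
  by move=> ?; rewrite !EFin_Rintegral // -EFinM lee_fin Fneg.
Qed.

Section normalized.
Variable f : X -> R.
Hypothesis fF : Fclass_norm dX x0 m1 m2 rho a ta f.

Let if_ : rho.-integrable setT (EFin \o f).
Proof. by case: fF => -[/L2_integrable]. Qed.

Lemma Fclass_norm_Rintegral : \int[rho]_x f x = 1.
Proof. by rewrite /Rintegral fF.2. Qed.

Lemma Fclass_norm_tail_pos s : m1 <= s -> \int[rho]_(x in ~` B s) f^\+ x <= a s.
Proof.
move=> s1; have [[_ _ fpos _] f1] := fF; have := fpos s s1.
rewrite f1 mule1 EFin_Rintegral //.
exact: integrable_setTS (mBc s) (integrable_funrpos measurableT if_).
Qed.

Lemma Fclass_norm_tail_neg s : m2 <= s -> \int[rho]_(x in ~` B s) f^\- x <= ta s.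
Proof.
move=> s2; have [[_ _ _ fneg] f1] := fF; have := fneg s s2.
rewrite f1 mule1 EFin_Rintegral //.
exact: integrable_setTS (mBc s) (integrable_funrneg measurableT if_).
Qed.

Lemma Fclass_norm_neg_le : \int[rho]_x f^\- x <= ta m2.
Proof.
have ifn := integrable_funrneg measurableT if_.
rewrite (Rintegral_setC (mB m2) ifn).
have -> : \int[rho]_(x in B m2) f^\- x = 0.
  have [[_ fae _ _] _] := fF.
  rewrite /Rintegral (ae_eq_integral (cst 0%E)) ?integral0 //.
  - exact: measurable_int (integrable_setTS (mB m2) ifn).
  - apply: filterS fae => x f0 /f0 fx0.
    by rewrite /funrneg max_r // oppr_le0.
by rewrite add0r Fclass_norm_tail_neg.
Qed.

End normalized.
End tail_classes.

Section Gclass_tests.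
Context d (X : measurableType d) (R : realType) (dX : X -> X -> R) (x0 : X).
Variables (m1 m2 : R) (nu : probability X R) (a ta : R -> R) (g : X -> R).
Hypotheses (mB : forall s, measurable (ball_c dX x0 s)) (m1_gt0 : 0 < m1) (m12 : m1 <= m2)
  (a_ge0 : forall s, 0 < s -> 0 <= a s) (ta_ge0 : forall s, 0 < s -> 0 <= ta s)
  (gG : Gclass dX x0 m1 m2 nu a ta g).
Local Notation B := (ball_c dX x0).
Local Notation nB1 := (fine (nu (B m1))).
Local Notation nb s := (fine (nu (~` B s))).

Implicit Types (F : X -> R) (M c : R).

Let mBc s : measurable (~` B s) := measurableC (mB s).

Let ig : nu.-integrable setT (EFin \o g).
Proof. by case: gG => /L2_integrable. Qed.

Let mg : measurable_fun setT g.
Proof. by apply/measurable_EFinP; exact: measurable_int ig. Qed.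

Let igp : nu.-integrable setT (EFin \o g^\+) := integrable_funrpos measurableT ig.

Let subB s t : s <= t -> B s `<=` B t.
Proof. by move=> st x /le_trans; apply. Qed.

Let mpre (Y : set R) : measurable Y -> measurable (g @^-1` Y).
Proof. by move=> mY; rewrite -[X in measurable X]setTI; exact: mg. Qed.

Let Gclass_test F M : measurable_fun setT F -> (forall x, `|F x| <= M) ->
  Fclass dX x0 m1 m2 nu a ta F -> 0 <= \int[nu]_x (F x * g x).
Proof.
move=> mF FM /(proj2 gG); rewrite EFin_Rintegral ?lee_fin //.
exact: integrable_bounded_mul mF FM ig.
Qed.

Let neg_test c x := c * \1_(B m1) x + \1_(g @^-1` `]-oo, 0[) x.

Let measurable_neg_test c : measurable_fun setT (neg_test c).
Proof.
exact: measurable_funD (measurable_funM (measurable_cst c) (measurable_indic (mB m1)))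
  (measurable_indic (mpre (measurable_itv `]-oo, 0[))).
Qed.

Let neg_test_ge0 c x : 0 <= c -> 0 <= neg_test c x.
Proof. by move=> c0; rewrite addr_ge0 ?mulr_ge0 ?indic_ge0. Qed.

Let neg_test_bounded c x : 0 <= c -> `|neg_test c x| <= c + 1.
Proof.
by move=> c0; rewrite ger0_norm ?neg_test_ge0 // lerD ?indic_le1 // ler_piMr ?indic_le1.
Qed.

Let neg_test_Fclass c : 0 <= c -> (forall s, m1 <= s -> nb s <= a s * (c * nB1)) ->
  Fclass dX x0 m1 m2 nu a ta (neg_test c).
Proof.
move=> c0 Hc; have mF := measurable_neg_test c; have Fb x := neg_test_bounded x c0.
have mA := mpre (measurable_itv `]-oo, 0[).
have iF := L2_integrable (L2_bounded nu mF Fb).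
have intF : c * nB1 <= \int[nu]_x neg_test c x.
  rewrite RintegralD //; last exact: integrable_indic.
    rewrite RintegralZl //; last exact: integrable_indic.
    by rewrite Rintegral_indic // setIT lerDl Rintegral_ge0 // => x _; exact: indic_ge0.
  by apply: integrableZ_EFin; exact: integrable_indic.
apply: (Fclass_bounded mB mF Fb) => [x _|s s1|s s2]; first exact: neg_test_ge0.
  have s0 : 0 < s by exact: lt_le_trans s1.
  apply: le_trans (le_trans (Hc s s1) (ler_wpM2l (a_ge0 s0) intF)).
  rewrite -[nb s]mul1r -Rintegral_cst //; apply: le_Rintegral => //.
  - exact: integrable_setTS (mBc s) (integrable_funrpos measurableT iF).
  - exact: finite_measure_integrable_cst.
  move=> x /= xs; rewrite /funrpos max_l ?neg_test_ge0 // /neg_test indicE memNset ?mulr0 ?add0r.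
    exact: indic_le1.
  by move/(subB s1).
rewrite (@eq_Rintegral _ _ _ nu _ (cst 0)) ?Rintegral_cst // ?mul0r.
  rewrite mulr_ge0 ?ta_ge0 ?(le_trans _ intF) ?mulr_ge0 ?fine_ge0 //.
  exact: lt_le_trans (le_trans m12 s2).
by move=> x _; rewrite /funrneg max_r // oppr_le0 neg_test_ge0.
Qed.

Lemma Gclass_neg_le c : 0 <= c ->
    (forall s, m1 <= s -> nb s <= a s * (c * nB1)) ->
  \int[nu]_x g^\- x <= c * \int[nu]_x g^\+ x.
Proof.
move=> c0 Hc; have mF := measurable_neg_test c; have Fb x := neg_test_bounded x c0.
have := Gclass_test mF Fb (neg_test_Fclass c0 Hc).
suff : \int[nu]_x (neg_test c x * g x) <= c * \int[nu]_x g^\+ x - \int[nu]_x g^\- x.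
  by lra.
rewrite -RintegralZl // -RintegralB //; last first.
- exact: integrable_funrneg.
- exact: integrableZ_EFin.
apply: le_Rintegral => //.
- exact: integrable_bounded_mul mF Fb ig.
- by apply: integrableB_EFin; [exact: integrableZ_EFin|exact: integrable_funrneg].
move=> x _; have i0 := indic_ge0 R (B m1) x; have i1 := indic_le1 R (B m1) x.
have ci := mulr_ge0 c0 i0.
rewrite /neg_test /funrpos /funrneg [\1_(g @^-1` _) x]indicE.
case: (leP 0 (g x)) => gx.
  rewrite (max_r (_ : - g x <= 0)) ?oppr_le0 // memNset /=; last by rewrite in_itv /= ltNge gx.
  by have := mulr_ge0 c0 gx; nra.
rewrite (max_l (_ : 0 <= - g x)) ?oppr_ge0 ?(ltW gx) // mem_set /=; last by rewrite in_itv.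
by nra.
Qed.

Let pos_test c r x := c * \1_(B m1) x - \1_(~` B r `&` g @^-1` `]0, +oo[) x.

Let measurable_pos_test c r : measurable_fun setT (pos_test c r).
Proof.
have mA := measurableI _ _ (mBc r) (mpre (measurable_itv `]0, +oo[)).
exact: measurable_funB (measurable_funM (measurable_cst c) (measurable_indic (mB m1)))
  (measurable_indic mA).
Qed.

Let pos_test_bounded c r x : 0 <= c -> `|pos_test c r x| <= c + 1.
Proof.
move=> c0; have := indic_ge0 R (B m1) x; have := indic_le1 R (B m1) x.
have := indic_ge0 R (~` B r `&` g @^-1` `]0, +oo[) x.
have := indic_le1 R (~` B r `&` g @^-1` `]0, +oo[) x.
by rewrite ler_norml /pos_test => *; apply/andP; split; nra.
Qed.

Let pos_test_Fclass c r : m2 <= r -> 0 <= c -> 0 <= c * nB1 - nb r ->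
    (forall s t, 0 < s -> s <= t -> ta t <= ta s) ->
    (forall t, r <= t -> nb t <= ta t * (c * nB1 - nb r)) ->
  Fclass dX x0 m1 m2 nu a ta (pos_test c r).
Proof.
move=> m2r c0 S0 ta_dec Hc; have m1r := le_trans m12 m2r.
have mA := measurableI _ _ (mBc r) (mpre (measurable_itv `]0, +oo[)).
have mF := measurable_pos_test c r; have Fb x := pos_test_bounded r x c0.
have iF := L2_integrable (L2_bounded nu mF Fb).
have intF : c * nB1 - nb r <= \int[nu]_x pos_test c r x.
  rewrite RintegralB //; last 2 first.
  - by apply: integrableZ_EFin; exact: integrable_indic.
  - exact: integrable_indic.
  rewrite RintegralZl //; last exact: integrable_indic.
  rewrite !Rintegral_indic // !setIT lerD2l lerN2 fine_le ?fin_num_measure //.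
  by apply: le_measure; rewrite ?inE //; exact: subIsetl.
apply: (Fclass_bounded mB mF Fb) => [x xB|s s1|s s2].
- rewrite /pos_test [\1_(_ `&` _) x]indicE memNset ?subr0 ?mulr_ge0 ?indic_ge0 //.
  by case=> /(_ (subB m2r xB)).
- rewrite (@eq_Rintegral _ _ _ nu _ (cst 0)) ?Rintegral_cst // ?mul0r.
    by rewrite mulr_ge0 ?a_ge0 ?(le_trans S0 intF) //; exact: lt_le_trans s1.
  move=> x /set_mem xs; rewrite /funrpos max_r // /pos_test [\1_(B m1) x]indicE.
  by rewrite memNset ?mulr0 ?sub0r ?oppr_le0 ?indic_ge0 // => /(subB s1).
have s1 := le_trans m12 s2; have s0 := lt_le_trans m1_gt0 s1.
pose t := Num.max s r; have st : s <= t by rewrite le_max lexx.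
have rt : r <= t by rewrite le_max lexx orbT.
apply: (@le_trans _ _ (nb t)).
  rewrite (@eq_Rintegral _ _ _ nu _ (\1_(~` B r `&` g @^-1` `]0, +oo[))); last first.
    move=> x /set_mem xs; rewrite /funrneg /pos_test [\1_(B m1) x]indicE memNset.
      by rewrite mulr0 sub0r opprK max_l ?indic_ge0.
    by move/(subB s1).
  rewrite Rintegral_indic // fine_le ?fin_num_measure //; first exact: measurableI.
  apply: le_measure; rewrite ?inE //; first exact: measurableI.
  by move=> x [[xr _] xs]; rewrite /B /ball_c /= le_max => /orP[].
apply: le_trans (Hc t rt) _; apply: ler_pM => //; last exact: ta_dec.
exact: ta_ge0 (lt_le_trans s0 st).
Qed.

Lemma Gclass_tail_le c r : m2 <= r -> 0 <= c -> 0 <= c * nB1 - nb r ->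
    (forall s t, 0 < s -> s <= t -> ta t <= ta s) ->
    (forall t, r <= t -> nb t <= ta t * (c * nB1 - nb r)) ->
  \int[nu]_(x in ~` B r) g^\+ x <= c * \int[nu]_x g^\+ x.
Proof.
move=> m2r c0 S0 ta_dec Hc; have m1r := le_trans m12 m2r.
have mF := measurable_pos_test c r; have Fb x := pos_test_bounded r x c0.
have iFg := integrable_bounded_mul mF Fb ig.
pose iB (F : X -> \bar R) := @integrable_setTS _ _ _ nu _ F (mB r).
pose iBc (F : X -> \bar R) := @integrable_setTS _ _ _ nu _ F (mBc r).
have := Gclass_test mF Fb (pos_test_Fclass m2r c0 S0 ta_dec Hc).
rewrite (Rintegral_setC (mB r) iFg).
have inner : \int[nu]_(x in B r) (pos_test c r x * g x) <=
    c * \int[nu]_(x in B r) g^\+ x.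
  rewrite -RintegralZl //; last exact: iB _ igp.
  apply: le_Rintegral => //; [exact: iB _ iFg | exact/iB/integrableZ_EFin/igp |].
  move=> x xB; rewrite /pos_test [\1_(_ `&` _) x]indicE memNset; last by case.
  have i0 := indic_ge0 R (B m1) x; have i1 := indic_le1 R (B m1) x.
  have ci := mulr_ge0 c0 i0; rewrite subr0 /funrpos.
  by case: (leP 0 (g x)) => gx; [have := mulr_ge0 c0 gx|]; nra.
have outer : \int[nu]_(x in ~` B r) (pos_test c r x * g x) <=
    - \int[nu]_(x in ~` B r) g^\+ x.
  rewrite -mulN1r -RintegralZl //; last exact: iBc _ igp.
  apply: le_Rintegral => //; [exact: iBc _ iFg | exact/iBc/integrableZ_EFin/igp |].
  move=> x xBc; rewrite /pos_test [\1_(B m1) x]indicE memNset; last by move/(subB m1r).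
  rewrite mulr0 sub0r indicE; case: (ltP 0 (g x)) => gx.
    by rewrite mem_set //= ?in_itv /= ?gx // /funrpos max_l ?(ltW gx) //; lra.
  rewrite memNset; last by case=> _; rewrite /= in_itv /= ltNge gx.
  by rewrite /funrpos max_r // mulr0n oppr0 mul0r mulr0.
have I0 : 0 <= \int[nu]_(x in B r) g^\+ x.
  by apply: Rintegral_ge0 => x _; exact: funrpos_ge0.
have Q0 : 0 <= \int[nu]_(x in ~` B r) g^\+ x.
  by apply: Rintegral_ge0 => x _; exact: funrpos_ge0.
rewrite (Rintegral_setC (mB r) igp); nra.
Qed.

End Gclass_tests.

Section ediv_sup.
Context (R : realType).
Implicit Types (u v : R -> R) (c a s : R).
Local Notation esup u v r :=
  (ereal_sup [set ediv (u a) (v a) | a in [set a : R | r <= a]]).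

Lemma ediv_ge0 c a : 0 <= a -> 0 <= c -> (0 <= ediv c a)%E.
Proof. by rewrite /ediv => a0 c0; case: eqP => _; [case: eqP|rewrite lee_fin divr_ge0]. Qed.

Lemma ediv_le c a s : 0 <= a -> (ediv c a <= s%:E)%E -> c <= a * s.
Proof.
rewrite /ediv => a0; case: eqP => [->|/eqP a_neq0].
  by case: eqP => [->|_]; rewrite ?mul0r // leye_eq.
have a_gt0 : 0 < a by rewrite lt_def a_neq0.
by rewrite lee_fin -(ler_pM2l a_gt0) mulrCA divff ?mulr1.
Qed.

Lemma ediv_sup_ge0 u v r0 : 0 <= u r0 -> 0 <= v r0 -> (0 <= esup u v r0)%E.
Proof.
move=> u0 v0; apply: le_trans (ediv_ge0 v0 u0) _.
by apply: ereal_sup_ubound; exists r0 => /=.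
Qed.

Lemma ediv_sup_le u v r0 s a : (esup u v r0 <= s%:E)%E -> r0 <= a -> 0 <= v a ->
  u a <= v a * s.
Proof.
move=> Ss r0a v0; apply: ediv_le v0 (le_trans _ Ss).
by apply: ereal_sup_ubound; exists a.
Qed.

End ediv_sup.

Lemma measurable_ball_c d (X : measurableType d) (R : realType) (dX : X -> X -> R) x0 s :
  polish_borel dX -> measurable (ball_c dX x0 s).
Proof.
case=> [[_ _ dsym dtri] _ _ borel].
rewrite -[ball_c _ _ _]setCK; apply: measurableC; apply/borel.
apply: sub_sigma_algebra => x /= xs.
have sx : s < dX x0 x by rewrite ltNge; apply/negP.
exists (dX x0 x - s); first by rewrite subr_gt0.
move=> y /= xy ys; have := dtri x0 y x; rewrite (dsym y x); move: ys; rewrite /ball_c /=.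
by lra.
Qed.

Section betas.
Context d (X : measurableType d) (R : realType) (dX : X -> X -> R) (x0 : X).
Variables (m1 : R) (nu : probability X R).
Hypotheses (mB : forall s, measurable (ball_c dX x0 s))
  (nuB : (0 < nu (ball_c dX x0 m1))%E).
Local Notation B := (ball_c dX x0).
Local Notation nB1 := (fine (nu (B m1))).
Local Notation nb s := (fine (nu (~` B s))).

Let nB1_gt0 : 0 < nB1.
Proof. by apply: fine_gt0; rewrite nuB -gt0_fin_numE // fin_num_measure. Qed.

Let nb_ge0 s : 0 <= nb s := fine_ge0 (measure_ge0 _ _).

Lemma beta2_tilde_ge0 a2 r : 0 <= a2 r -> (0 <= beta2_tilde dX x0 m1 nu a2 r)%E.
Proof.
move=> a2r; rewrite mule_ge0 ?lee_fin ?invr_ge0 ?fine_ge0 ?measure_ge0 //.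
by rewrite ediv_sup_ge0 // le_min a2r ler01.
Qed.

Lemma beta2_tilde_tail a2 r b : (forall s, r <= s -> 0 <= a2 s) ->
    (beta2_tilde dX x0 m1 nu a2 r <= b%:E)%E ->
  forall s, r <= s -> nb s <= a2 s * (b * nB1).
Proof.
move=> a2_ge0 + s rs; rewrite /beta2_tilde lee_pdivrMl // -EFinM mulrC => Sb.
have min_ge0 t : r <= t -> 0 <= Num.min (a2 t) 1 by move=> rt; rewrite le_min a2_ge0 // ler01.
apply: le_trans (ediv_sup_le Sb rs (min_ge0 s rs)) _.
rewrite ler_wpM2r ?ge_min ?lexx // -lee_fin (le_trans _ Sb) //.
exact: (@ediv_sup_ge0 _ (fun a => nb a) (fun a => Num.min (a2 a) 1) r (nb_ge0 r)
  (min_ge0 r (lexx r))).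
Qed.

Lemma beta2_ge0 ta2 r : 0 <= ta2 r -> (0 <= beta2 dX x0 m1 nu ta2 r)%E.
Proof.
move=> ta2r; rewrite mule_ge0 ?lee_fin ?invr_ge0 ?fine_ge0 ?measure_ge0 //.
by rewrite adde_ge0 ?ediv_sup_ge0.
Qed.

Let beta2_sup_le ta2 r b : (beta2 dX x0 m1 nu ta2 r <= b%:E)%E ->
  (ereal_sup [set ediv (nb a) (ta2 a) | a in [set a : R | (r <= a)%R]]
    <= (b * nB1 - nb r)%:E)%E.
Proof.
rewrite /beta2 lee_pdivrMl // -[nu (~` B r)]fineK ?fin_num_measure //; last first.
  exact: measurableC.
by rewrite EFinB leeBrDr // -EFinM mulrC.
Qed.

Lemma beta2_tail_ge0 ta2 r b : 0 <= ta2 r -> (beta2 dX x0 m1 nu ta2 r <= b%:E)%E ->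
  0 <= b * nB1 - nb r.
Proof.
move=> ta2r /beta2_sup_le Sb; rewrite -lee_fin (le_trans _ Sb) //.
exact: (@ediv_sup_ge0 _ (fun a => nb a) ta2 r (nb_ge0 r) ta2r).
Qed.

Lemma beta2_tail ta2 r b : (forall t, r <= t -> 0 <= ta2 t) ->
    (beta2 dX x0 m1 nu ta2 r <= b%:E)%E ->
  forall t, r <= t -> nb t <= ta2 t * (b * nB1 - nb r).
Proof. by move=> ta2_ge0 /beta2_sup_le Sb t rt; exact: ediv_sup_le Sb rt (ta2_ge0 t rt). Qed.

End betas.

(* a, b (resp. c, e) are the masses of f^+ and f^- inside (resp. outside) B_r,
   and l - 2 b2 - N is the lower bound of G on B_r. *)
Lemma lower_bound_arith (R : realType) (l t2 tr ar bt b2 N a b c e I : R) :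
    a - b + c - e = 1 -> 0 <= a -> 0 <= b -> 0 <= c -> 0 <= e ->
    b <= t2 -> c <= ar -> e <= tr -> tr <= t2 -> t2 <= 1 / 2 ->
    0 <= N -> N <= 2 * bt -> bt <= 1 / 2 -> 0 <= b2 -> 0 <= l -> l <= 1 ->
    (l - 2 * b2 - N) * a - (1 + N) * b - N * c - (1 + N) * e <= I ->
  l - t2 - 4 * bt - 4 * ar - 4 * tr - 5 * b2 <= I.
Proof.
move=> f1 a0 b0 c0 e0 bt2 car etr trt2 t2h N0 Nbt bth b20 l0 l1; apply: le_trans.
set lam := l - 2 * b2 - N.
have -> : lam * a - (1 + N) * b = lam * (1 - c + e) - (1 + N - lam) * b.
  by rewrite (_ : a = 1 + b - c + e); [ring | lra].
have lam_ge : lam - c - b2 - e <= lam * (1 - c + e).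
  have [lam0|lam0] := lerP 0 lam.
    have : lam <= 1 by rewrite /lam; lra.
    by nra.
  have : - (2 * b2 + 1) <= lam by rewrite /lam; lra.
  by nra.
have Nlam_le : (1 + N - lam) * b <= t2 + N + b2.
  by rewrite (_ : 1 + N - lam = (1 - l) + 2 * N + 2 * b2) /lam; [nra | lra].
rewrite /lam in lam_ge Nlam_le *; nra.
Qed.

Section LKt_lower_bound.
Context d (X : measurableType d) (R : realType) (dX : X -> X -> R) (x0 : X).
Variables (mu nu : probability X R) (m1 m2 r : R) (K : X -> X -> R) (l : R).
Variables (a1 ta1 a2 ta2 : R -> R) (f g : X -> R) (bt b2 : R).
Local Notation B := (ball_c dX x0).
Local Notation nB1 := (fine (nu (B m1))).
Local Notation nb s := (fine (nu (~` B s))).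
Hypotheses (mB : forall s, measurable (B s)) (m1_gt0 : 0 < m1) (m12 : m1 <= m2)
  (m2r : m2 <= r) (mK : measurable_fun setT (fun p : X * X => K p.1 p.2))
  (K01 : forall x y, 0 <= K x y <= 1) (lK : forall x y, B r x -> B r y -> l <= K x y)
  (l0 : 0 <= l) (l1 : l <= 1)
  (a2_ge0 : forall s, 0 < s -> 0 <= a2 s) (ta2_ge0 : forall s, 0 < s -> 0 <= ta2 s)
  (ta2_dec : forall s t, 0 < s -> s <= t -> ta2 t <= ta2 s)
  (ta1_dec : ta1 r <= ta1 m2) (ta1_half : ta1 m2 <= 1 / 2)
  (fF : Fclass_norm dX x0 m1 m2 mu a1 ta1 f) (gG : Gclass_norm dX x0 m1 m2 nu a2 ta2 g)
  (bt0 : 0 <= bt) (bt_half : bt <= 1 / 2) (b20 : 0 <= b2)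
  (bt_tail : forall s, m1 <= s -> nb s <= a2 s * (bt * nB1))
  (b2_ge : 0 <= b2 * nB1 - nb r)
  (b2_tail : forall t, r <= t -> nb t <= ta2 t * (b2 * nB1 - nb r)).

Let ig : nu.-integrable setT (EFin \o g).
Proof. by case: gG => -[/L2_integrable]. Qed.

Lemma LKt_range : exists N, [/\ 0 <= N, N <= 2 * bt,
  forall x, - N <= LKt K nu g x <= 1 + N &
  forall x, B r x -> l - 2 * b2 - N <= LKt K nu g x].
Proof.
have [gG' g1] := gG.
set P := \int[nu]_x g^\+ x; set N := \int[nu]_x g^\- x.
set Q := \int[nu]_(x in ~` B r) g^\+ x.
have PN : P = 1 + N.
  by rewrite -[P](subrK N) -(Rintegral_funrposBneg measurableT ig) /Rintegral g1 addrC.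
have N0 : 0 <= N by apply: Rintegral_ge0 => x _; exact: funrneg_ge0.
have Q0 : 0 <= Q by apply: Rintegral_ge0 => x _; exact: funrpos_ge0.
have NP : N <= bt * P := Gclass_neg_le mB m1_gt0 m12 a2_ge0 ta2_ge0 gG' bt0 bt_tail.
have QP : Q <= b2 * P :=
  Gclass_tail_le mB m1_gt0 m12 a2_ge0 ta2_ge0 gG' m2r b20 b2_ge ta2_dec b2_tail.
rewrite PN in NP QP; have bth := bt_half; have b2_0 := b20; have l_0 := l0; have l_1 := l1.
have N2 : N <= 2 * bt by nra.
exists N; split => // [x|x xB].
  by rewrite -PN (LKt_ge_neg mK K01 ig) (LKt_le_pos mK K01 ig).
have := LKt_ge_on mK K01 ig (mB r) (fun y yB => lK yB xB); apply: le_trans.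
have := Rintegral_setC (mB r) (integrable_funrpos measurableT ig).
rewrite -/P -/Q -/N PN => PQ; rewrite -(addrK Q (\int[nu]_(x in B r) g^\+ x)) -PQ.
by have := mulr_ge0 l0 N0; have := mulr_ge0 (_ : 0 <= 1 - l) Q0; nra.
Qed.

Lemma LKt_integral_ge :
  ((l - ta1 m2 - 4 * bt - 4 * a1 r - 4 * ta1 r - 5 * b2)%:E
    <= \int[mu]_x (LKt K nu g x * f x)%:E)%E.
Proof.
have [N [N0 N2 G_range G_ball]] := LKt_range.
have [[L2f _ _ _] _] := fF; have i_f := L2_integrable L2f.
have iGf : mu.-integrable setT (EFin \o (fun x => LKt K nu g x * f x)).
  apply: (integrable_bounded_mul (M := 1 + N)) (measurable_LKt mK K01 ig) _ i_f => x.
  case/andP: (G_range x) => G_ge G_le; rewrite ler_norml G_le andbT.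
  by rewrite (le_trans _ G_ge) // lerN2 lerDr.
rewrite EFin_Rintegral // lee_fin.
have := Rintegral_mul_ge_split (mB r) i_f iGf
  (fun x xB => introT andP (conj (G_ball x xB) (proj2 (andP (G_range x))))) (fun x _ => G_range x).
have f_split := Rintegral_setC (mB r) i_f; have mBc := measurableC (mB r).
rewrite (Fclass_norm_Rintegral fF) !(Rintegral_funrposBneg _ i_f) // in f_split.
have pos D h : (forall x, 0 <= h x) -> 0 <= \int[mu]_(x in D) h x.
  by move=> h0; apply: Rintegral_ge0 => x _.
move=> HI; apply: (lower_bound_arith _ _ _ _ _ _ _ _ ta1_dec ta1_half N0 N2 bt_half b20 l0 l1).
- by rewrite f_split addrA.
- exact/pos/funrpos_ge0.
- exact/pos/funrneg_ge0.
- exact/pos/funrpos_ge0.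
- exact/pos/funrneg_ge0.
- apply: le_trans (Fclass_norm_neg_le mB fF).
  rewrite [leRHS](Rintegral_setC (mB r) (integrable_funrneg measurableT i_f)) lerDl.
  exact/pos/funrneg_ge0.
- exact (Fclass_norm_tail_pos mB fF (le_trans m12 m2r)).
- exact (Fclass_norm_tail_neg mB fF m2r).
- by move: HI; rewrite mulNr !addrA.
Qed.

End LKt_lower_bound.

Theorem lemma4p5 (R : realType) (d : measure_display) (X : measurableType d)
  (dX : X -> X -> R) (x0 : X) (mu nu : probability X R) (m1 m2 : R)
  (K : X -> X -> R) (l : R -> R) (a1 ta1 a2 ta2 : R -> R) (r : R) :
  polish_borel dX ->
  0 < m1 -> m1 <= m2 ->
  measurable_fun [set: X * X] (fun p => K p.1 p.2) ->
  (forall x y, 0 < K x y <= 1) ->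
  lower_decay dX x0 K l ->
  tail_fun a1 -> tail_fun ta1 -> tail_fun a2 -> tail_fun ta2 ->
  (0 < mu (ball_c dX x0 m1))%E -> (0 < nu (ball_c dX x0 m1))%E ->
  (forall s, 0 < s -> 0 < a1 s) -> (forall s, 0 < s -> 0 < a2 s) ->
  m2 <= r ->
  ta1 m2 <= 1 / 2 ->
  (beta2_tilde dX x0 m1 nu a2 m1 <= (1 / 2)%:E)%E ->
  l r <= 1 ->
  forall f g, Fclass_norm dX x0 m1 m2 mu a1 ta1 f ->
    Gclass_norm dX x0 m1 m2 nu a2 ta2 g ->
  ((l r)%:E - (ta1 m2)%:E - 4%:E * beta2_tilde dX x0 m1 nu a2 m1
     - (4 * a1 r)%:E - (4 * ta1 r)%:E
     - 5%:E * beta2 dX x0 m1 nu ta2 r - 5%:E * beta2_tilde dX x0 m1 nu a2 r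
   <= \int[mu]_x (LKt K nu g x * f x)%:E)%E.
Proof.
move=> PB m1_gt0 m12 mK K01 [l0 _ lK] _ [_ ta1_dec _] [a2_ge0 _ _] [ta2_ge0 ta2_dec _]
  _ nuB _ _ m2r ta1_half bt_half l1 f g fF gG.
have mB := measurable_ball_c x0 ^~ PB.
have m2_gt0 := lt_le_trans m1_gt0 m12; have r_gt0 := lt_le_trans m2_gt0 m2r.
have K01' x y : 0 <= K x y <= 1 by case/andP: (K01 x y) => /ltW -> ->.
have a2_ge0' s : m1 <= s -> 0 <= a2 s by move=> s1; apply/a2_ge0/(lt_le_trans m1_gt0).
have ta2_ge0' t : r <= t -> 0 <= ta2 t by move=> rt; apply/ta2_ge0/(lt_le_trans r_gt0).
have bt_ge0 := beta2_tilde_ge0 dX x0 m1 nu (a2_ge0' _ (lexx m1)).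
have b2_ge0 := beta2_ge0 dX x0 m1 nu (ta2_ge0' _ (lexx r)).
have bt2_ge0 := beta2_tilde_ge0 dX x0 m1 nu (a2_ge0 _ r_gt0).
have /fineK/esym btE : beta2_tilde dX x0 m1 nu a2 m1 \is a fin_num.
  by rewrite ge0_fin_numE // (le_lt_trans bt_half) ?ltry.
have [b2_inf|/fineK/esym b2E] : beta2 dX x0 m1 nu ta2 r = +oo%E \/
    beta2 dX x0 m1 nu ta2 r \is a fin_num.
  by rewrite ge0_fin_numE // ltey; case: eqP; [left|right].
  by rewrite b2_inf mulry gtr0_sg // mul1e addeNy addNye leNye.
have eqe_le (x y : \bar R) : x = y -> (x <= y)%E by move->.
rewrite btE lee_fin in bt_half; rewrite btE b2E.
apply: le_trans (LKt_integral_ge mB m1_gt0 m12 m2r mK K01' (lK r r_gt0) (l0 _ (ltW r_gt0))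
  l1 a2_ge0 ta2_ge0 ta2_dec (ta1_dec _ _ m2_gt0 m2r) ta1_half fF gG (fine_ge0 bt_ge0)
  bt_half (fine_ge0 b2_ge0) (beta2_tilde_tail mB nuB a2_ge0' (eqe_le _ _ btE))
  (beta2_tail_ge0 mB nuB (ta2_ge0' _ (lexx r)) (eqe_le _ _ b2E))
  (beta2_tail mB nuB ta2_ge0' (eqe_le _ _ b2E))).
by rewrite -!EFinM -!EFinB geeDl // oppe_le0 mule_ge0.
Qed.
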